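(* The ideal $\underline{\mathfrak c}([E_z]_{\mathbb C},f_\rho):=\{\alpha\in\mathcal O_{f_z}:\alpha\,\Omega'(\Lambda^\vee)\subset\Omega'(\Lambda)\}$ equals $f_\rho\sqrt{D_z}\,i\,\mathcal O_{f_z}=f_\rho f_z\sqrt{D_K}\,\mathcal O_{f_z}$. Consequently the CM group $(\mathcal O_{f_z}/\underline{\mathfrak c})^\times$ is $(\mathcal O_{f_z}/f_\rho f_z\sqrt{D_K}\mathcal O_{f_z})^\times$, and it is the same for all elliptic curves with complex multiplication by $\mathcal O_{f_z}$ and the same $f_\rho$.
   Context: Let $z\in\mathcal H$ (upper half plane) with $a_zz^2+b_zz+c_z=0$ for coprime integers $a_z>0,b_z,c_z$; $D_z=4a_zc_z-b_z^2>0$; $K=\mathbb Q(z)$, discriminant $D_K<0$, embedded with $\sqrt{D_K}\in\mathcal H$; $D_z=|D_K|f_z^2$; $\mathcal O_{f_z}$ the order of conductor $f_z$, i.e. the ring of complex multiplications of $E_z=\mathbb C/(\mathbb Z+z\mathbb Z)$. Let $f_\rho\ge1$. $\Lambda$: lattice with basis $e_2,e_1$ and Gram matrix $f_\rho\begin{pmatrix}2a_z&b_z\\ b_z&2c_z\end{pmatrix}$, $\Lambda^\vee$ its dual in $\Lambda\otimes\mathbb Q$; $\Omega':\Lambda\otimes\mathbb Q\to\mathbb C$ the $\mathbb Q$-linear map with $\Omega'(e_2)=\sqrt{2a_zf_\rho}$, $\Omega'(e_1)=-\sqrt{2a_zf_\rho}\,z$. The CM group is $(\mathcal O_{f_z}/\underline{\mathfrak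 c})^\times$, acting on $\Lambda^\vee/\Lambda$ via multiplication on $\Omega'(\Lambda^\vee)/\Omega'(\Lambda)$. *)

(* complex numbers modelled by algC (algebraic complex numbers);
   z is quadratic, so everything lives in algC. *)
From HB Require Import structures.
From mathcomp Require Import all_boot all_order all_algebra all_field.
Set Implicit Arguments. Unset Strict Implicit. Unset Printing Implicit Defensive.
Import Order.TTheory GRing.Theory Num.Theory.
Local Open Scope ring_scope.

Definition in_lat (z w : algC) : Prop :=
  exists m n : int, w = m%:~R + n%:~R * z.

(* O_{f_z}: the ring of complex multiplications of E_z = C/(Z + zZ) *)
Definition cm_ring (z : algC) (alpha : algC) : Prop :=
  forall w, in_lat z w -> in_lat z (alpha * w).

Definition Dz (a b c : int) : int := 4 * a * c - b ^+ 2.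

(* Omega' on Lambda (x) Q, with coordinates x = u e2 + v e1 :
   Omega'(e2) = sqrt(2 a f_rho), Omega'(e1) = - sqrt(2 a f_rho) z *)
Definition Omega' (a : int) (frho : nat) (z : algC) (u v : rat) : algC :=
  sqrtC ((2 * a * frho%:Z)%:~R) * ratr u - sqrtC ((2 * a * frho%:Z)%:~R) * z * ratr v.

(* x = u e2 + v e1 lies in the dual lattice Lambda^vee for the Gram matrix
   f_rho [[2a, b],[b, 2c]] (basis e2, e1): B(x,e2), B(x,e1) are integers *)
Definition in_dual (a b c : int) (frho : nat) (u v : rat) : Prop :=
  (exists k : int, (frho%:R * (2 * a%:~R * u + b%:~R * v) : rat) = k%:~R) /\
  (exists k : int, (frho%:R * (b%:~R * u + 2 * c%:~R * v) : rat) = k%:~R).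

Definition cideal (a b c : int) (frho : nat) (z : algC) (alpha : algC) : Prop :=
  cm_ring z alpha /\
  forall u v : rat, in_dual a b c frho u v ->
    exists m n : int, alpha * Omega' a frho z u v = Omega' a frho z m%:~R n%:~R.

Definition princ (z : algC) (gamma : algC) (alpha : algC) : Prop :=
  exists beta, cm_ring z beta /\ alpha = gamma * beta.

Definition squarefreez (d : int) : Prop :=
  forall k : int, (k * k %| d)%Z -> k * k = 1.

Definition fundamental_disc (d : int) : Prop :=
  d <> 1 /\
  (((d %% 4)%Z = 1 /\ squarefreez d) \/
   (exists m : int, d = 4 * m /\ ((m %% 4)%Z = 2 \/ (m %% 4)%Z = 3) /\ squarefreez m)).

Definition good_z (z : algC) (a b c : int) : Prop :=
  0 < 'Im z /\ 0 < a /\ gcdz (gcdz a b) c = 1 /\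
  a%:~R * z ^+ 2 + b%:~R * z + c%:~R = 0 /\ 0 < Dz a b c.

From HB Require Import structures.
From mathcomp Require Import all_boot all_order all_algebra all_field.
From mathcomp Require Import ring zify.
Import Order.TTheory GRing.Theory Num.Theory.
Set Implicit Arguments.
Unset Strict Implicit.
Unset Printing Implicit Defensive.

Local Open Scope ring_scope.

(* Put w = 2 a z + b, so that w^2 = -D_z and, as Im z > 0, w = i sqrt(D_z).
   For x = u e_2 + v e_1 we have Omega'(x) = sqrt(2 a f_rho) (u - z v) and
   f_rho w (u - z v) = B(x, e_2) z + B(x, e_1); hence x lies in the dual lattice
   iff f_rho w (u - z v) lies in Z + zZ, i.e. f_rho w Omega'(Lambda^vee) =
   sqrt(2 a f_rho) (Z + zZ) = Omega'(Lambda). So alpha Omega'(Lambda^vee) is in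
   Omega'(Lambda) iff alpha / (f_rho w) is in O_{f_z}, and since f_rho w is in
   O_{f_z} the ideal is f_rho w O_{f_z}.
   When gcd(a, b, c) = 1 the order is O_{f_z} = Z + Z a z, so two such z, z'
   with the same order satisfy a' z' = a z + m with m an integer; then w' - w is
   an integer, and both lying on the positive imaginary axis, w' = w. *)

Lemma dvdz_gcd3_coprime (a b c n : int) :
  gcdz (gcdz a b) c = 1 -> (a %| n * b)%Z -> (a %| n * c)%Z -> (a %| n)%Z.
Proof.
move=> abc1 anb anc.
have [u1 [v1 e1]] := Bezoutz a b; have [u2 [v2 e2]] := Bezoutz (gcdz a b) c.
have -> : n = n * u2 * u1 * a + u2 * v1 * (n * b) + v2 * (n * c).
  by rewrite -[LHS]mulr1 -abc1 -e2 -e1; ring.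
by rewrite !rpredD //; apply: dvdz_mull.
Qed.

Lemma real_mul_nonreal_eq_real (x r s : algC) :
  'Im x != 0 -> r \is Num.real -> s \is Num.real -> r * x = s -> r = 0 /\ s = 0.
Proof.
move=> Imx0 rR sR rxs.
have /eqP : 'Im (r * x) = 'Im s by rewrite rxs.
rewrite ImMl // (Creal_ImP _ sR) mulf_eq0 (negbTE Imx0) orbF => /eqP r0.
by split=> //; rewrite -rxs r0 mul0r.
Qed.

Lemma intr_mul_nonreal_eq_intr (x : algC) (m n : int) :
  'Im x != 0 -> m%:~R * x = n%:~R -> m = 0 /\ n = 0.
Proof.
move=> Imx0 /real_mul_nonreal_eq_real[]; rewrite ?realz //.
by move=> /eqP + /eqP; rewrite !intr_eq0 => /eqP-> /eqP->.
Qed.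

Lemma sqr_eqN_Im_gt0 (x r : algC) :
  0 < 'Im x -> 0 <= r -> x ^+ 2 = - r -> x = sqrtC r * 'i.
Proof.
move=> Imx r_ge0 xr.
have : x ^+ 2 == (sqrtC r * 'i) ^+ 2 by rewrite exprMn sqrCi sqrtCK mulrN1 xr.
rewrite eqf_sqr => /orP[/eqP // | /eqP xN].
have : 'Im x <= 0.
  by rewrite xN raddfN /= ImMir (Creal_ReP _ (sqrtC_real r_ge0)) oppr_le0 sqrtC_ge0.
by move=> /(lt_le_trans Imx); rewrite ltxx.
Qed.

Lemma in_lat_intr (z : algC) (m n : int) : in_lat z (m%:~R + n%:~R * z).
Proof. by exists m, n. Qed.

Lemma in_lat_intrM (z w : algC) (k : int) : in_lat z w -> in_lat z (k%:~R * w).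
Proof. by case=> m [n ->]; exists (k * m), (k * n); rewrite !rmorphM /=; ring. Qed.

Lemma cm_ring_intr (z : algC) (k : int) : cm_ring z k%:~R.
Proof. by move=> w; apply: in_lat_intrM. Qed.

Lemma cm_ringM (z x y : algC) : cm_ring z x -> cm_ring z y -> cm_ring z (x * y).
Proof. by move=> Ox Oy w Lw; rewrite -mulrA; apply/Ox/Oy. Qed.

Section QuadraticIrrationality.

Variables (z : algC) (a b c : int).
Hypothesis z_root : a%:~R * z ^+ 2 + b%:~R * z + c%:~R = 0.

Local Notation disc_root := (2 * a%:~R * z + b%:~R).

Lemma disc_root_sqr : disc_root ^+ 2 = - (Dz a b c)%:~R.
Proof.
transitivity (4 * a%:~R * (a%:~R * z ^+ 2 + b%:~R * z + c%:~R) - (Dz a b c)%:~R : algC).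
  by rewrite /Dz; ring.
by rewrite z_root mulr0 sub0r.
Qed.

Lemma disc_root_neq0 : Dz a b c != 0 -> disc_root != 0.
Proof.
move=> D0; apply: contra_neq D0 => disc_root0; apply: (@intr_inj algC).
by rewrite -[LHS]opprK -disc_root_sqr disc_root0 expr0n /= oppr0.
Qed.

Lemma disc_rootE :
  0 < 'Im z -> 0 < a -> 0 <= Dz a b c -> disc_root = sqrtC (Dz a b c)%:~R * 'i.
Proof.
move=> Imz a_gt0 D_ge0; apply: sqr_eqN_Im_gt0; rewrite ?ler0z ?disc_root_sqr //.
by rewrite raddfD /= (Creal_ImP _ (realz _ _)) addr0 ImMl ?realM ?realz // !mulr_gt0 ?ltr0z.
Qed.

Lemma cm_ring_az : cm_ring z (a%:~R * z).
Proof.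
move=> _ [m [n ->]].
have -> : a%:~R * z * (m%:~R + n%:~R * z) = (- (n * c))%:~R + (a * m - n * b)%:~R * z.
  transitivity (a%:~R * z * m%:~R - n%:~R * (b%:~R * z + c%:~R)
                + n%:~R * (a%:~R * z ^+ 2 + b%:~R * z + c%:~R)); first by ring.
  by rewrite z_root; ring.
exact: in_lat_intr.
Qed.

Lemma cm_ring_disc_root : cm_ring z disc_root.
Proof.
move=> _ [m [n ->]].
have -> : disc_root * (m%:~R + n%:~R * z) = (b * m - 2 * c * n)%:~R + (2 * a * m - b * n)%:~R * z.
  transitivity ((b * m - 2 * c * n)%:~R + (2 * a * m - b * n)%:~R * z
                + 2 * n%:~R * (a%:~R * z ^+ 2 + b%:~R * z + c%:~R)); first by ring.
  by rewrite z_root; ring.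
exact: in_lat_intr.
Qed.

Variable f : nat.

Local Notation Omega'_e2 := (sqrtC (2 * a * f%:Z)%:~R : algC).

Lemma Omega'E (u v : rat) : Omega' a f z u v = Omega'_e2 * (ratr u - z * ratr v).
Proof. by rewrite /Omega'; ring. Qed.

Lemma Omega'_lattice (y : algC) :
  Omega'_e2 != 0 -> (exists m n : int, Omega'_e2 * y = Omega' a f z m%:~R n%:~R) <-> in_lat z y.
Proof.
move=> e2_neq0; split=> [[m [n]] | [m [n ->]]].
  by rewrite Omega'E !ratr_int => /(mulfI e2_neq0) ->; exists m, (- n); rewrite rmorphN /=; ring.
by exists m, (- n); rewrite Omega'E !ratr_int rmorphN /=; ring.
Qed.

Lemma disc_root_mul_coords (u v : rat) :
  f%:R * disc_root * (ratr u - z * ratr v) =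
  ratr (f%:R * (2 * a%:~R * u + b%:~R * v)) * z + ratr (f%:R * (b%:~R * u + 2 * c%:~R * v)).
Proof.
transitivity (ratr (f%:R * (2 * a%:~R * u + b%:~R * v)) * z + ratr (f%:R * (b%:~R * u + 2 * c%:~R * v))
              - 2 * f%:R * ratr v * (a%:~R * z ^+ 2 + b%:~R * z + c%:~R)); first by ring.
by rewrite z_root; ring.
Qed.

Lemma in_dual_in_lat (u v : rat) :
  in_dual a b c f u v -> in_lat z (f%:R * disc_root * (ratr u - z * ratr v)).
Proof.
case=> [[k1 e1] [k2 e2]]; rewrite disc_root_mul_coords e1 e2 !ratr_int addrC.
exact: in_lat_intr.
Qed.

Lemma in_lat_in_dual (y : algC) : (0 < f)%N -> Dz a b c != 0 -> in_lat z y ->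
  exists u v, in_dual a b c f u v /\ f%:R * disc_root * (ratr u - z * ratr v) = y.
Proof.
move=> f_gt0 D0 [m [n ->]].
have f0 : f%:R != 0 :> rat by rewrite pnatr_eq0 -lt0n.
have D0' : 4 * a%:~R * c%:~R - b%:~R ^+ 2 != 0 :> rat.
  by apply: contra_neq D0 => e; apply: (@intr_inj rat); rewrite mulr0z -e /Dz; ring.
(* (u, v) solves the Gram system f [[2a, b], [b, 2c]] (u, v) = (n, m). *)
pose u : rat := (2 * c%:~R * n%:~R - b%:~R * m%:~R) / (f%:R * (4 * a%:~R * c%:~R - b%:~R ^+ 2)).
pose v : rat := (2 * a%:~R * m%:~R - b%:~R * n%:~R) / (f%:R * (4 * a%:~R * c%:~R - b%:~R ^+ 2)).
have eu : f%:R * (2 * a%:~R * u + b%:~R * v) = n%:~R by rewrite /u /v; field; rewrite f0 D0'.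
have ev : f%:R * (b%:~R * u + 2 * c%:~R * v) = m%:~R by rewrite /u /v; field; rewrite f0 D0'.
exists u, v; split; first by split; [exists n | exists m].
by rewrite disc_root_mul_coords eu ev !ratr_int addrC.
Qed.

Lemma cideal_disc_root (alpha : algC) : (0 < f)%N -> a != 0 -> Dz a b c != 0 ->
  cideal a b c f z alpha <-> princ z (f%:R * disc_root) alpha.
Proof.
move=> f_gt0 a0 D0.
have e2_neq0 : Omega'_e2 != 0 by rewrite sqrtC_eq0 intr_eq0 !mulf_neq0 // -lt0n.
have gamma_neq0 : f%:R * disc_root != 0 by rewrite mulf_neq0 ?pnatr_eq0 -?lt0n ?disc_root_neq0.
split=> [[_ alpha_dual] | [beta [Obeta ->]]].
  exists (alpha / (f%:R * disc_root)); split; last by rewrite mulrC divfK.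
  move=> _ /(in_lat_in_dual f_gt0 D0) [u [v [duv <-]]].
  rewrite mulrA divfK // -(Omega'_lattice _ e2_neq0) mulrCA -Omega'E.
  exact: alpha_dual.
have Of : cm_ring z f%:R := cm_ring_intr f.
split; first exact: cm_ringM (cm_ringM Of cm_ring_disc_root) Obeta.
move=> u v /in_dual_in_lat /Obeta /(Omega'_lattice _ e2_neq0) [m [n e]].
by exists m, n; rewrite -e Omega'E; ring.
Qed.

Lemma cm_ringP (alpha : algC) : 'Im z != 0 -> gcdz (gcdz a b) c = 1 ->
  cm_ring z alpha -> exists m k : int, alpha = m%:~R + k%:~R * (a%:~R * z).
Proof.
move=> Imz0 abc1 Oalpha.
have [m [n alphaE]] : in_lat z alpha.
  by have := Oalpha _ (in_lat_intr z 1 0); rewrite mul0r addr0 mulr1.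
have [p [q alphazE]] : in_lat z (alpha * z).
  by have := Oalpha _ (in_lat_intr z 0 1); rewrite add0r mul1r.
(* Comparing coordinates of a (alpha z) gives a | n b and a | n c. *)
have E : (a * m - n * b - a * q)%:~R * z = (a * p + n * c)%:~R :> algC.
  transitivity ((a * p + n * c)%:~R + a%:~R * (alpha * z - (p%:~R + q%:~R * z))
                - n%:~R * (a%:~R * z ^+ 2 + b%:~R * z + c%:~R)); first by rewrite alphaE; ring.
  by rewrite -alphazE subrr z_root; ring.
have [e1 e2] := intr_mul_nonreal_eq_intr Imz0 E.
have /dvdzP [k nE] : (a %| n)%Z.
  by apply: dvdz_gcd3_coprime abc1 _ _; apply/dvdzP; [exists (m - q) | exists (- p)]; lia.
by exists m, k; rewrite alphaE nE; ring.
Qed.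

End QuadraticIrrationality.

Lemma cideal_sqrt_Dz (z : algC) (a b c : int) (f : nat) (alpha : algC) :
  good_z z a b c -> (0 < f)%N ->
  cideal a b c f z alpha <-> princ z (f%:R * sqrtC (Dz a b c)%:~R * 'i) alpha.
Proof.
case=> Imz [a_gt0 [_ [z_root D_gt0]]] f_gt0.
rewrite -mulrA -(disc_rootE z_root) ?ltW //.
exact (cideal_disc_root z_root alpha f_gt0 (lt0r_neq0 a_gt0) (lt0r_neq0 D_gt0)).
Qed.

Lemma sqrtC_mul_sqr (x y : algC) : 0 <= x -> 0 <= y -> sqrtC (x * y ^+ 2) = y * sqrtC x.
Proof. by move=> x_ge0 y_ge0; rewrite sqrtCM ?nnegrE ?exprn_ge0 // sqrCK // mulrC. Qed.

Section SameOrder.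

Variables (z z' : algC) (a b c a' b' c' : int).
Hypotheses (gz : good_z z a b c) (gz' : good_z z' a' b' c').
Hypothesis same_cm_ring : forall alpha, cm_ring z' alpha <-> cm_ring z alpha.

Lemma same_cm_ring_az : exists m : int, a'%:~R * z' = m%:~R + a%:~R * z.
Proof.
have [Imz [a_gt0 [abc1 [z_root _]]]] := gz.
have [Imz' [a'_gt0 [abc1' [z'_root _]]]] := gz'.
have [m [k e]] := cm_ringP z_root (lt0r_neq0 Imz) abc1 ((same_cm_ring _).1 (cm_ring_az z'_root)).
have [m' [k' e']] := cm_ringP z'_root (lt0r_neq0 Imz') abc1' ((same_cm_ring _).2 (cm_ring_az z_root)).
have kk' : k' * k = 1.
  have E : ((1 - k' * k) * a)%:~R * z = (m' + k' * m)%:~R :> algC.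
    rewrite e in e'.
    transitivity (a%:~R * z - (k' * k)%:~R * (a%:~R * z)); first by ring.
    by rewrite {1}e'; ring.
  have [/eqP + _] := intr_mul_nonreal_eq_intr (lt0r_neq0 Imz) E.
  by rewrite mulf_eq0 (gt_eqF a_gt0) orbF subr_eq0 => /eqP.
have k_gt0 : 0 < k.
  have : 'Im (a'%:~R * z') = k%:~R * a%:~R * 'Im z.
    by rewrite e raddfD /= (Creal_ImP _ (realz _ _)) add0r !ImMl ?realz // mulrA.
  rewrite ImMl ?realz // => Ek.
  have : 0 < k%:~R * a%:~R * 'Im z :> algC by rewrite -Ek mulr_gt0 ?ltr0z.
  by rewrite pmulr_lgt0 // pmulr_lgt0 ?ltr0z.
have k'_gt0 : 0 < k' by rewrite -(pmulr_lgt0 _ k_gt0) kk'.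
have k1 : k = 1 by nia.
by exists m; rewrite e k1 mul1r.
Qed.

Lemma same_cm_ring_Dz : Dz a' b' c' = Dz a b c.
Proof.
have [Imz [a_gt0 [_ [z_root D_gt0]]]] := gz.
have [Imz' [a'_gt0 [_ [z'_root D'_gt0]]]] := gz'.
have [m e] := same_cm_ring_az.
have E : (sqrtC (Dz a' b' c')%:~R - sqrtC (Dz a b c)%:~R) * 'i = (2 * m + b' - b)%:~R :> algC.
  rewrite mulrBl -(disc_rootE z_root) -?(disc_rootE z'_root) ?ltW //.
  transitivity (2 * (a'%:~R * z') + b'%:~R - (2 * a%:~R * z + b%:~R) : algC); first by ring.
  by rewrite e; ring.
have Imi : 'Im 'i != 0 :> algC by rewrite Im_i oner_neq0.
have sqrtD_real (d : int) : 0 < d -> sqrtC (d%:~R : algC) \is Num.real.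
  by move=> d_gt0; rewrite sqrtC_real // ler0z ltW.
have dR := rpredB (sqrtD_real _ D'_gt0) (sqrtD_real _ D_gt0).
have [/eqP + _] := real_mul_nonreal_eq_real Imi dR (realz _ _) E.
rewrite subr_eq0 => /eqP /(congr1 (fun x => x ^+ 2)).
by rewrite !sqrtCK => /intr_inj.
Qed.

End SameOrder.

Theorem proposition3p1p2 (z : algC) (a b c : int) (frho : nat) (DK : int) (fz : nat) :
  good_z z a b c -> (1 <= frho)%N ->
  fundamental_disc DK -> Dz a b c = - DK * (fz%:Z) ^+ 2 ->
  (* c = f_rho sqrt(D_z) i O_{f_z} *)
  (forall alpha, cideal a b c frho z alpha <->
     princ z (frho%:R * sqrtC (Dz a b c)%:~R * 'i) alpha) /\
  (* c = f_rho f_z sqrt(D_K) O_{f_z}, with sqrt(D_K) = i sqrt|D_K| in H *)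
  (forall alpha, cideal a b c frho z alpha <->
     princ z (frho%:R * fz%:R * ('i * sqrtC (- DK)%:~R)) alpha) /\
  (* the ideal (hence the CM group (O_{f_z}/c)^x) is the same for every
     elliptic curve E_{z'} with CM ring O_{f_z} and the same f_rho *)
  (forall (z' : algC) (a' b' c' : int), good_z z' a' b' c' ->
     (forall alpha, cm_ring z' alpha <-> cm_ring z alpha) ->
     forall alpha, cideal a' b' c' frho z' alpha <-> cideal a b c frho z alpha).
Proof.
move=> gz f_gt0 _ DzE.
have D_gt0 : 0 < Dz a b c by case: gz => _ [_ [_ []]].
have sqrtDE : sqrtC (Dz a b c)%:~R = fz%:R * sqrtC (- DK)%:~R :> algC.
  have DK_le0 : 0 <= - DK by move: D_gt0; rewrite DzE; nia.
  by rewrite DzE rmorphM rmorphXn /= sqrtC_mul_sqr ?ler0z ?ler0n.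
split; first by move=> alpha; exact: cideal_sqrt_Dz.
split; first by move=> alpha; rewrite cideal_sqrt_Dz // sqrtDE (mulrC 'i) !mulrA.
move=> z' a' b' c' gz' same_cm_ring alpha.
rewrite !cideal_sqrt_Dz // (same_cm_ring_Dz gz gz' same_cm_ring).
by split=> -[beta [Obeta ->]]; exists beta; split=> //; apply/same_cm_ring.
Qed.
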